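(* Let $V$ be an $m$-dimensional vector space with volume form $\omega$, and let $(F,G,H)$ be a generic triple of decorated flags. For nonnegative integers $a,b,c,s$ with $a+b+c=m-s$ and $a,b,c>0$, $$\Delta^s_{a,b,c}\,\Delta^{s+1}_{a,b-1,c}=\Delta^s_{a+1,b-1,c}\,\Delta^{s+1}_{a-1,b,c}+\Delta^s_{a,b-1,c+1}\,\Delta^{s+1}_{a,b,c-1}.$$
   Context: A decorated flag in $(V,\omega)$ is a flag $F_1\subset\cdots\subset F_{m-1}$ ($\dim F_i=i$) with nonzero $f_{(i)}\in\wedge^iF_i$ for $1\le i\le m-1$; put $f_{(0)}=1$ and let $f_{(m)}\in\wedge^mV$ with $\langle f_{(m)},\omega\rangle=1$; similarly $G=(G_\bullet,g_{(i)})$, $H=(H_\bullet,h_{(i)})$. For generic $(F,G)$ there is a basis $f_1,\dots,f_m$ of $V$ with $f_k\in F_k\cap G_{m+1-k}$ and $f_{(k)}=f_1\wedge\cdots\wedge f_k$ for all $k$; for generic $(G,H)$ there is a basis $h_1,\dots,h_m$ with $h_k\in G_{m+1-k}\cap H_k$ and $h_{(k)}=h_k\wedge h_{k-1}\wedge\cdots\wedge h_1$. Put $f_{s,(k)}=f_{s+1}\wedge\cdots\wedge f_{s+k}$ and $h_{(k),s}=h_{s+k}\wedge\cdots\wedge h_{s+1}$. For $a+b+c=m-s$, $f_{s,(a)}\wedge g_{(b)}\wedge h_{(c),s}\in\wedge^{m-s}G_{m-s}$ (with $G_m=V$, $g_{(m)}$ normalized by $\langle g_{(m)},\omega\rangle=1$),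 and $\Delta^s_{a,b,c}:=\langle f_{s,(a)}\wedge g_{(b)}\wedge h_{(c),s},\omega_s\rangle$, where $\omega_s$ is the volume form on $G_{m-s}$ with $\langle g_{(m-s)},\omega_s\rangle=\langle f_{(s)}\wedge g_{(m-s)},\omega\rangle\langle g_{(m-s)}\wedge h_{(s)},\omega\rangle$. For $s=0$, $\Delta^0_{a,b,c}=\Delta_{a,b,c}:=\langle f_{(a)}\wedge g_{(b)}\wedge h_{(c)},\omega\rangle$. *)

From HB Require Import structures.
From mathcomp Require Import all_boot all_order all_algebra.
Set Implicit Arguments. Unset Strict Implicit. Unset Printing Implicit Defensive.
Import GRing.Theory.
Local Open Scope ring_scope.

(* Model: V = 'rV[K]_m (row vectors), volume form  omega = w0 * det  (w0 <> 0;
   every volume form on K^m is of this shape).  A decomposable k-vector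
   v_1 /\ ... /\ v_k is represented by the sequence [:: v_1; ...; v_k]. *)

Definition vecs (K : fieldType) (m : nat) (v : nat -> 'rV[K]_m) (lo n : nat)
  : seq 'rV[K]_m := [seq v k | k <- iota lo n].

Definition rows (K : fieldType) (m k : nat) (s : seq 'rV[K]_m) : 'M[K]_(k, m) :=
  \matrix_(i < k, j < m) (nth 0 s i) 0 j.

Definition vol (K : fieldType) (m : nat) (w0 : K) (s : seq 'rV[K]_m) : K :=
  w0 * \det (rows m s).

(* For k-vectors X, Y with span X <= span Y and Y free:  the scalar lambda with
   X_1/\.../\X_k = lambda * Y_1/\.../\Y_k  (determinant of the change of
   coefficients X = P Y). *)
Definition wedge_ratio (K : fieldType) (m k : nat) (X Y : seq 'rV[K]_m) : K :=
  \det (rows k X *m pinvmx (rows k Y)).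

Definition wedge_eq (K : fieldType) (m k : nat) (X Y : seq 'rV[K]_m) : Prop :=
  [/\ size X = k, size Y = k, row_free (rows k Y),
      (rows k X <= rows k Y)%MS & wedge_ratio k X Y = 1].

Definition in_span (K : fieldType) (m k : nat) (v : 'rV[K]_m) (Y : seq 'rV[K]_m)
  : bool := (v <= rows k Y)%MS.

(* A decorated flag given by an adapted family u_1,...,u_(m-1):
   F_i = span(u_1..u_i), f_(i) = u_1 /\ ... /\ u_i  (1 <= i <= m-1). *)
Definition decorated_flag (K : fieldType) (m : nat) (u : nat -> 'rV[K]_m) : Prop :=
  row_free (rows m.-1 (vecs u 1 m.-1)).

(* The basis f_1..f_m attached to (F,G): f_k in F_k /\ G_(m+1-k),
   f_(k) = f_1/\../\f_k for all k (for k = m: <f_(m),omega> = 1). *)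
Definition FG_basis (K : fieldType) (m : nat) (w0 : K)
    (u g f : nat -> 'rV[K]_m) : Prop :=
  [/\ row_free (rows m (vecs f 1 m)),
      (forall k, (1 <= k < m)%N -> in_span k (f k) (vecs u 1 k)),
      (forall k, (1 <= k <= m)%N -> in_span (m + 1 - k) (f k) (vecs g 1 (m + 1 - k))),
      (forall k, (1 <= k < m)%N -> wedge_eq k (vecs f 1 k) (vecs u 1 k))
    & vol w0 (vecs f 1 m) = 1].

(* The basis h_1..h_m attached to (G,H): h_k in G_(m+1-k) /\ H_k,
   h_(k) = h_k/\h_(k-1)/\../\h_1 for all k (for k = m: <h_(m),omega> = 1). *)
Definition GH_basis (K : fieldType) (m : nat) (w0 : K)
    (g w h : nat -> 'rV[K]_m) : Prop :=
  [/\ row_free (rows m (vecs h 1 m)),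
      (forall k, (1 <= k < m)%N -> in_span k (h k) (vecs w 1 k)),
      (forall k, (1 <= k <= m)%N -> in_span (m + 1 - k) (h k) (vecs g 1 (m + 1 - k))),
      (forall k, (1 <= k < m)%N -> wedge_eq k (rev (vecs h 1 k)) (vecs w 1 k))
    & vol w0 (rev (vecs h 1 m)) = 1].

(* Delta^s_{a,b,c} = < f_{s,(a)} /\ g_(b) /\ h_{(c),s} , omega_s >, where
   omega_s is the volume form on G_(m-s) with
   <g_(m-s), omega_s> = <f_(s)/\g_(m-s), omega> <g_(m-s)/\h_(s), omega>;
   the (m-s)-vector X = f_{s,(a)}/\g_(b)/\h_{(c),s} lies in /\^(m-s) G_(m-s),
   so X = lambda g_(m-s) and <X,omega_s> = lambda <g_(m-s),omega_s>. *)
Definition Delta (K : fieldType) (m : nat) (w0 : K) (f g h : nat -> 'rV[K]_m)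
    (s a b c : nat) : K :=
  let X := vecs f s.+1 a ++ vecs g 1 b ++ rev (vecs h s.+1 c) in
  let gms := vecs g 1 (m - s) in
  let omega_s_g := vol w0 (vecs f 1 s ++ gms) * vol w0 (gms ++ rev (vecs h 1 s)) in
  wedge_ratio (m - s) X gms * omega_s_g.

(* Factoring out the volume form omega_s, Delta^s_{a,b,c} becomes
   <f_(s) /\ X, omega> times a constant depending only on s, where
   X = f_{s,(a)} /\ g_(b) /\ h_{(c),s} lies in G_(m-s).  Each product in the
   identity is then a product of two m x m determinants, and the identity is
   the three-term Pluecker relation among determinants sharing m - 2 rows, a
   consequence of Sylvester's exchange identity. *)

From HB Require Import structures.
From mathcomp Require Import all_boot all_order all_algebra perm.
From mathcomp Require Import zify ring.
Set Implicit Arguments. Unset Strict Implicit. Unset Printing Implicit Defensive.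
Import GRing.Theory.
Local Open Scope ring_scope.

Lemma nth_catr (T : Type) (x0 : T) (X Y : seq T) n :
  nth x0 (X ++ Y) (size X + n) = nth x0 Y n.
Proof. by elim: X. Qed.

Lemma set_nth_catr (T : Type) (x0 : T) (X Y : seq T) n y :
  set_nth x0 (X ++ Y) (size X + n) y = X ++ set_nth x0 Y n y.
Proof. by elim: X => //= x X ->. Qed.

Section SeqDeterminant.
Variables (K : fieldType) (m : nat).
Implicit Types (S T X Y Z : seq 'rV[K]_m) (x y z : 'rV[K]_m).

Definition sdet S := \det (rows m S).

Lemma rowsE k S i j : rows k S i j = (nth 0 S i) 0 j.
Proof. by rewrite mxE. Qed.

Lemma row_rows k S i : row i (rows k S) = nth 0 S i.
Proof. by apply/rowP => j; rewrite !mxE; congr (_ _ _); apply: val_inj; rewrite ord1. Qed.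

Lemma sdet_set_nth S (i : 'I_m) z :
  sdet (set_nth 0 S i z) = \sum_j z 0 j * cofactor (rows m S) i j.
Proof.
rewrite /sdet (expand_det_row _ i); apply: eq_bigr => j _.
rewrite rowsE nth_set_nth /= eqxx; congr (_ * (_ * \det _)).
apply/matrixP => k l; rewrite !mxE nth_set_nth /=.
by rewrite eq_sym (negbTE (neq_bump _ _)).
Qed.

(* Sylvester's exchange identity: expand both sides along the rows
   of [\det A *: z = (z *m \adj A) *m A], with [A = rows m S]. *)
Lemma sdet_exchange S T (p : 'I_m) z :
  sdet S * sdet (set_nth 0 T p z) =
  \sum_(i < m) sdet (set_nth 0 S i z) * sdet (set_nth 0 T p (nth 0 S i)).
Proof.
set A := rows m S.
rewrite sdet_set_nth big_distrr /=.
transitivity (\sum_j ((z *m \adj A) *m A) 0 j * cofactor (rows m T) p j).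
  by apply: eq_bigr => j _; rewrite -mulmxA mul_adj_mx mul_mx_scalar mxE mulrA.
transitivity (\sum_j \sum_i (z *m \adj A) 0 i * A i j * cofactor (rows m T) p j).
  by apply: eq_bigr => j _; rewrite mxE big_distrl.
rewrite exchange_big /=; apply: eq_bigr => i _.
rewrite !sdet_set_nth big_distrr /=.
have -> : (z *m \adj A) 0 i = \sum_j z 0 j * cofactor A i j.
  by rewrite mxE; apply: eq_bigr => j _; rewrite mxE.
by apply: eq_bigr => j _; rewrite -mulrA rowsE.
Qed.

Lemma sdet_swap X Y x y : ((size X).+1 < m)%N ->
  sdet (X ++ x :: y :: Y) = - sdet (X ++ y :: x :: Y).
Proof.
move=> hs; have h1 : (size X < m)%N by lia.
pose i1 : 'I_m := Ordinal h1; pose i2 : 'I_m := Ordinal hs.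
rewrite /sdet.
have -> : rows m (X ++ y :: x :: Y) = xrow i1 i2 (rows m (X ++ x :: y :: Y)).
  apply/matrixP => k j; rewrite !mxE !nth_cat; congr (_ 0 j).
  case: tpermP => [->|->|n1 n2] /=.
  - by rewrite ltnn subnn ltnNge leqnSn subSnn.
  - by rewrite ltnn subnn ltnNge leqnSn subSnn.
  case: ltnP => // hk; case E: (k - size X)%N => [|[|d]] //=.
  - by case: n1; apply: val_inj => /=; lia.
  - by case: n2; apply: val_inj => /=; lia.
rewrite xrowE det_mulmx det_perm odd_tperm.
by rewrite -val_eqE /= ltn_eqF // expr1 mulN1r opprK.
Qed.

Lemma sdet_move_end X Y x : (size X + size Y < m)%N ->
  sdet (X ++ x :: Y) = (-1) ^+ size Y * sdet (X ++ Y ++ [:: x]).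
Proof.
elim: Y X => [|y Y IH] X /= hs; first by rewrite mul1r.
rewrite sdet_swap; last by lia.
rewrite -cat_rcons IH ?size_rcons; last by lia.
by rewrite cat_rcons exprS mulN1r mulNr.
Qed.

Lemma sdet_eq0 S : size S = m -> ~~ uniq S -> sdet S = 0.
Proof.
move=> hS /(uniqPn 0) [i [j [hij hj eq_ij]]].
have hj' : (j < m)%N by rewrite -hS.
have hi : (i < m)%N := ltn_trans hij hj'.
rewrite /sdet (@determinant_alternate _ _ _ (Ordinal hi) (Ordinal hj')) //.
  by rewrite -val_eqE /= ltn_eqF.
by move=> k; rewrite !rowsE eq_ij.
Qed.

Lemma sdet_plucker T a b c d : (size T + 2)%N = m ->
  sdet (T ++ [:: a; b]) * sdet (T ++ [:: c; d]) =
  sdet (T ++ [:: a; d]) * sdet (T ++ [:: c; b])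
  + sdet (T ++ [:: a; c]) * sdet (T ++ [:: b; d]).
Proof.
move=> hm; have hp0 : (size T + 0 < m)%N by lia.
have hp1 : (size T + 1 < m)%N by lia.
have neq10 : Ordinal hp1 != Ordinal hp0 by rewrite -val_eqE /= eqn_add2l.
have := sdet_exchange (T ++ [:: a; b]) (T ++ [:: c; d]) (Ordinal hp1) d.
rewrite (bigD1 (Ordinal hp0)) // (bigD1 (Ordinal hp1)) //= big1 ?addr0.
  rewrite !set_nth_catr !nth_catr /= => ->.
  rewrite (@sdet_swap T [::] d b) ?(@sdet_swap T [::] c a) ?addn2; [ring | lia | lia].
move=> i /andP [ni0 ni1].
have hiT : (i < size T)%N.
  by move: ni0 ni1 (ltn_ord i); rewrite -!val_eqE /=; lia.
rewrite nth_cat hiT set_nth_catr /= [sdet (T ++ _)]sdet_eq0 ?mulr0 //.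
  by rewrite size_cat.
by rewrite cat_uniq /= mem_nth // orbT andbF.
Qed.
End SeqDeterminant.

Section VolumeForm.
Variables (K : fieldType) (m : nat) (w0 : K).
Implicit Types (S T X Y : seq 'rV[K]_m) (x y z t : 'rV[K]_m).

Lemma volE S : vol w0 S = w0 * sdet S.
Proof. by []. Qed.

Lemma vol_move_end X Y x : (size X + size Y < m)%N ->
  vol w0 (X ++ x :: Y) = (-1) ^+ size Y * vol w0 (X ++ Y ++ [:: x]).
Proof. by move=> hs; rewrite !volE sdet_move_end // mulrCA. Qed.

Lemma vol_plucker T x y z t : (size T + 2)%N = m ->
  vol w0 (T ++ [:: x; y]) * vol w0 (T ++ [:: z; t]) =
  vol w0 (T ++ [:: x; t]) * vol w0 (T ++ [:: z; y])
  + vol w0 (T ++ [:: x; z]) * vol w0 (T ++ [:: y; t]).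
Proof. by move=> hm; rewrite !volE mulrACA sdet_plucker //; ring. Qed.

Lemma vol_plucker_insert Q Wg Wh x y z t :
  (size Q + size Wg + size Wh + 2)%N = m ->
  vol w0 (Q ++ Wg ++ y :: Wh ++ [:: t]) * vol w0 (Q ++ x :: Wg ++ z :: Wh)
  = vol w0 (Q ++ x :: Wg ++ Wh ++ [:: t]) * vol w0 (Q ++ Wg ++ y :: z :: Wh)
  + vol w0 (Q ++ Wg ++ z :: Wh ++ [:: t]) * vol w0 (Q ++ x :: Wg ++ y :: Wh).
Proof.
(* Bring every determinant to the shape [vol (T ++ [:: _; _])]. *)
move=> hm; set T := Q ++ Wg ++ Wh.
have hT : (size T + 2)%N = m by rewrite !size_cat addnA.
have shift_Wh v : vol w0 (Q ++ Wg ++ v :: Wh ++ [:: t]) =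
    - (-1) ^+ size Wh * vol w0 (T ++ [:: t; v]).
  rewrite catA vol_move_end ?size_cat /=; last by lia.
  by rewrite -!catA addn1 exprS mulN1r.
have shift_Wg_Wh v v' : vol w0 (Q ++ v :: Wg ++ v' :: Wh) =
    - (-1) ^+ size Wg * vol w0 (T ++ [:: v'; v]).
  rewrite (catA Q (v :: Wg)) vol_move_end ?size_cat /=; last by lia.
  rewrite -catA /= (vol_move_end (X := Q)) ?size_cat /=; last by lia.
  rewrite -!catA -[RHS](signrMK (size Wh)) !exprD; ring.
have shift_Wg : vol w0 (Q ++ x :: Wg ++ Wh ++ [:: t]) =
    - (-1) ^+ (size Wg + size Wh) * vol w0 (T ++ [:: t; x]).
  rewrite (vol_move_end (X := Q)) ?size_cat /=; last by lia.
  by rewrite -!catA addnA addn1 exprS mulN1r.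
have shift_yz : vol w0 (Q ++ Wg ++ y :: z :: Wh) = - vol w0 (T ++ [:: z; y]).
  rewrite catA -cat_rcons vol_move_end ?size_rcons ?size_cat; last by lia.
  rewrite cat_rcons vol_move_end ?size_cat /=; last by lia.
  by rewrite -!catA -[RHS](signrMK (size Wh)) !exprD; ring.
rewrite !shift_Wh !shift_Wg_Wh shift_Wg shift_yz exprD mulrACA (vol_plucker _ _ _ _ hT).
ring.
Qed.
End VolumeForm.

Lemma rows_col_mx (K : fieldType) (m s n : nat) (F X : seq 'rV[K]_m) :
  size F = s -> rows (s + n) (F ++ X) = col_mx (rows s F) (rows n X).
Proof.
move=> hF; apply/matrixP => i j; rewrite !mxE.
by case: splitP => k ->; rewrite !mxE nth_cat hF ?ltn_ord // ltnNge leq_addr addKn.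
Qed.

Lemma rows_submx (K : fieldType) (m k n : nat) (X : seq 'rV[K]_m) (M : 'M_(n, m)) :
  (forall v, v \in X -> (v <= M)%MS) -> (rows k X <= M)%MS.
Proof.
move=> hX; apply/row_subP => i; rewrite row_rows.
by case: (ltnP i (size X)) => hi; [apply/hX/mem_nth | rewrite nth_default ?sub0mx].
Qed.

(* If [rows X = P *m rows G], then [col_mx F X = block_mx 1 0 0 P *m col_mx F G]. *)
Lemma wedge_ratio_vol (K : fieldType) (m s n : nat) (w0 : K) (F X G : seq 'rV[K]_m) :
  (s + n)%N = m -> size F = s -> (rows n X <= rows n G)%MS ->
  wedge_ratio n X G * vol w0 (F ++ G) = vol w0 (F ++ X).
Proof.
move=> hm hF hXG; subst m; rewrite /vol /wedge_ratio !rows_col_mx //.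
set P := rows n X *m pinvmx (rows n G).
have -> : col_mx (rows s F) (rows n X) = block_mx 1%:M 0 0 P *m col_mx (rows s F) (rows n G).
  by rewrite mul_block_col !mul1mx !mul0mx addr0 add0r mulmxKpV.
by rewrite det_mulmx det_ublock det1 mul1r mulrCA.
Qed.

Section Vecs.
Variables (K : fieldType) (m : nat) (u : nat -> 'rV[K]_m).

Lemma vecsS lo n : vecs u lo n.+1 = u lo :: vecs u lo.+1 n.
Proof. by []. Qed.

Lemma vecs_rcons lo n : vecs u lo n.+1 = vecs u lo n ++ [:: u (lo + n)%N].
Proof. by rewrite /vecs -[n.+1]addn1 iotaD map_cat. Qed.

Lemma size_vecs lo n : size (vecs u lo n) = n.
Proof. by rewrite size_map size_iota. Qed.

Lemma mem_vecs lo n v : v \in vecs u lo n -> exists2 k, (lo <= k < lo + n)%N & v = u k.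
Proof. by move=> /mapP [k]; rewrite mem_iota => hk ->; exists k. Qed.

Lemma vecs_submx lo n k : (lo <= k < lo + n)%N -> (u k <= rows n (vecs u lo n))%MS.
Proof.
move=> /andP [hlo hk]; have hi : (k - lo < n)%N by lia.
have -> : u k = row (Ordinal hi) (rows n (vecs u lo n)).
  by rewrite row_rows (nth_map 0%N) ?size_iota // nth_iota // subnKC.
exact: row_sub.
Qed.

Lemma vecs_prefix_submx lo j n : (j <= n)%N ->
  (rows j (vecs u lo j) <= rows n (vecs u lo n))%MS.
Proof.
move=> hjn; apply: rows_submx => v /mem_vecs [k hk ->].
by apply: vecs_submx; lia.
Qed.
End Vecs.

Section DeltaAsVolume.
Variables (K : fieldType) (m : nat) (w0 : K) (f g h : nat -> 'rV[K]_m).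

Definition in_flag_G (v : nat -> 'rV[K]_m) :=
  forall k, (1 <= k <= m)%N -> in_span (m + 1 - k) (v k) (vecs g 1 (m + 1 - k)).

Lemma in_flag_G_sub v s k : in_flag_G v -> (s < k <= m)%N ->
  (v k <= rows (m - s) (vecs g 1 (m - s)))%MS.
Proof.
move=> hv /andP [hsk hkm].
by apply: submx_trans (hv k _) (vecs_prefix_submx _ _ _); [apply/andP; split|]; lia.
Qed.

Hypotheses (hfG : in_flag_G f) (hhG : in_flag_G h).

Lemma Delta_vol s a b c : (a + b + c = m - s)%N -> (s <= m)%N ->
  Delta w0 f g h s a b c =
  vol w0 (vecs f 1 s ++ vecs f s.+1 a ++ vecs g 1 b ++ rev (vecs h s.+1 c))
  * vol w0 (vecs g 1 (m - s) ++ rev (vecs h 1 s)).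
Proof.
move=> habc hsm; rewrite /Delta mulrA (wedge_ratio_vol (s := s)) ?size_vecs ?subnKC //.
apply: rows_submx => v; rewrite !mem_cat mem_rev.
case/or3P => /mem_vecs [k /andP [hk1 hk2] ->].
- by apply: in_flag_G_sub => //; apply/andP; split; lia.
- by apply: vecs_submx; apply/andP; split; lia.
- by apply: in_flag_G_sub => //; apply/andP; split; lia.
Qed.
End DeltaAsVolume.

Theorem mainTheorem14 (K : fieldType) (m : nat) (w0 : K) (hw0 : w0 != 0)
    (u g w : nat -> 'rV[K]_m)
    (hF : decorated_flag u) (hG : decorated_flag g)
    (hgm : vol w0 (vecs g 1 m) = 1) (hH : decorated_flag w)
    (f h : nat -> 'rV[K]_m)
    (hf : FG_basis w0 u g f) (hh : GH_basis w0 g w h)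
    (a b c s : nat) (habc : (a + b + c = m - s)%N)
    (ha : (0 < a)%N) (hb : (0 < b)%N) (hc : (0 < c)%N) :
  Delta w0 f g h s a b c * Delta w0 f g h s.+1 a b.-1 c =
    Delta w0 f g h s a.+1 b.-1 c * Delta w0 f g h s.+1 a.-1 b c
  + Delta w0 f g h s a b.-1 c.+1 * Delta w0 f g h s.+1 a b c.-1.
Proof.
have hfG : in_flag_G g f by case: hf.
have hhG : in_flag_G g h by case: hh.
case: a ha habc => // a _; case: b hb => // b _; case: c hc => // c _ habc /=.
rewrite !Delta_vol //; try lia.
set Cs := vol w0 (vecs g 1 (m - s) ++ _); set Cs1 := vol w0 (vecs g 1 (m - s.+1) ++ _).
rewrite (vecsS f s.+1 a.+1) (vecsS f s.+1 a) (vecs_rcons f s.+2 a) (vecs_rcons f 1 s).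
rewrite (vecsS h s.+1 c.+1) (vecsS h s.+1 c) (vecs_rcons h s.+2 c) (vecs_rcons g 1 b).
rewrite !rev_cons !rev_cat -!cats1 /= -!catA /= !add1n.
have := @vol_plucker_insert K m w0 (vecs f 1 s ++ f s.+1 :: vecs f s.+2 a)
  (vecs g 1 b) (rev (vecs h s.+2 c)) (f (s.+2 + a)) (g b.+1) (h (s.+2 + c)) (h s.+1).
rewrite -!catA /= !size_cat /= size_rev !size_vecs => plucker.
rewrite [LHS]mulrACA plucker; [ring | lia].
Qed.
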